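(* For any finite connected interval graph $G$, $\mathrm{imp}(G)\ge \mathrm{wt}(G)$.
   Context: A finite simple graph $G=(V,E)$ is an interval graph iff there is a representation $\alpha: v\mapsto I_v$ of the vertices by (closed, bounded) intervals of the real line such that $vw\in E$ iff $I_v\cap I_w\neq\emptyset$. For a representation $\alpha$ and a vertex $z$, the impropriety $\mathrm{imp}_\alpha(z)$ is the number of representing intervals $I_w$, $w\neq z$, with $I_w\subseteq I_z$. The impropriety $\mathrm{imp}(\alpha)$ is $\max_z \mathrm{imp}_\alpha(z)$, and $\mathrm{imp}(G)$ is the minimum of $\mathrm{imp}(\alpha)$ over all interval representations $\alpha$ of $G$. A local component at $z$ is a connected component of $G\setminus\{z\}$; it is exterior iff it contains a vertex not adjacent to $z$. If $z$ has $n$ local components, the weight $\mathrm{wt}(z)$ is the sum of the $n-2$ smallest orders among the non-exterior local components at $z$ ($0$ if $n\le2$). The weight $\mathrm{wt}(G)$ is the maximum of $\mathrm{wt}(z)$ over all vertices $z$. *)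

From HB Require Import structures.
From mathcomp Require Import all_boot all_order all_algebra.
Set Implicit Arguments. Unset Strict Implicit. Unset Printing Implicit Defensive.
Import Order.TTheory GRing.Theory Num.Theory.

Definition simple_graph (T : finType) (e : rel T) : Prop :=
  symmetric e /\ irreflexive e.

Definition connected_graph (T : finType) (e : rel T) : Prop :=
  forall x y : T, connect e x y.

(* An interval representation: v |-> I_v = [lo v, hi v] (closed, bounded,
   nonempty), with vw an edge iff I_v and I_w intersect (v <> w). *)
Definition interval_rep (R : realFieldType) (T : finType) (e : rel T)
    (lo hi : T -> R) : Prop :=
  (forall v, (lo v <= hi v)%R) /\
  (forall v w, v != w -> (e v w <-> ((lo v <= hi w) && (lo w <= hi v))%R)).

Definition is_interval_graph (R : realFieldType) (T : finType) (e : rel T) : Prop :=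
  exists lo hi : T -> R, interval_rep e lo hi.

Definition imp_at (R : realFieldType) (T : finType) (lo hi : T -> R) (z : T) : nat :=
  #|[pred w | (w != z) && ((lo z <= lo w) && (hi w <= hi z))%R]|.

Definition imp_rep (R : realFieldType) (T : finType) (lo hi : T -> R) : nat :=
  \max_(z : T) imp_at lo hi z.

Definition del_rel (T : finType) (e : rel T) (z : T) : rel T :=
  fun x y => [&& e x y, x != z & y != z].

Definition local_components (T : finType) (e : rel T) (z : T) : {set {set T}} :=
  [set [set y | (y != z) && connect (del_rel e z) x y] | x in [set x | x != z]].

Definition exterior (T : finType) (e : rel T) (z : T) (C : {set T}) : bool :=
  [exists v in C, ~~ e z v].

(* wt(z): sum of the n-2 smallest orders among non-exterior local components
   (0 if n <= 2, which is automatic since n - 2 = 0 in nat). *)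
Definition wt_at (T : finType) (e : rel T) (z : T) : nat :=
  let LC := local_components e z in
  let n := #|LC| in
  let s := sort leq [seq #|C| | C : {set T} <- enum [set C in LC | ~~ exterior e z C]] in
  sumn (take (n - 2) s).

Definition wt (T : finType) (e : rel T) : nat := \max_(z : T) wt_at e z.

From HB Require Import structures.
From mathcomp Require Import all_boot all_order all_algebra.
From mathcomp Require Import lra zify.
Set Implicit Arguments. Unset Strict Implicit. Unset Printing Implicit Defensive.
Import Order.TTheory GRing.Theory Num.Theory.

(* Fix an interval representation z |-> [lo z, hi z] and a vertex z with n
   local components.  Call a local component NESTED at z when all of its
   intervals lie inside [lo z, hi z].
   - A component containing a vertex that starts left of lo z also contains a
     vertex whose interval covers lo z (otherwise z could not be reached from
     it, G being connected); two such components would be joined by an edge,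
     so at most one component reaches left of z, and symmetrically (mirroring
     the line) at most one reaches right of z.  Hence at least n - 2 local
     components are nested.
   - Nested components are non-exterior, and they are pairwise disjoint sets
     of vertices w <> z with I_w contained in I_z; so the sum of their orders
     is at most imp_alpha(z).
   - The sum of the n - 2 smallest orders of non-exterior components is at
     most the sum over any subfamily of at least n - 2 of them. *)

Lemma prefix_sum_move_front (a : nat) (w1 w2 : seq nat) (k : nat) :
  all (leq a) w1 ->
  sumn (take k (a :: w1 ++ w2)) <= sumn (take k (w1 ++ a :: w2)).
Proof.
elim: w1 k => [|b w1 IH] k //= /andP[ab le_w1].
case: k => [|k] //=; have := IH k le_w1.
by case: k => [|j] /=; lia.
Qed.

Lemma sorted_prefix_sum_min (u w : seq nat) : sorted leq u -> perm_eq u w ->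
  forall k, sumn (take k u) <= sumn (take k w).
Proof.
elim: u w => [|a u IH] w; first by move=> _ _ [].
move=> sorted_au perm_auw k.
have aw : a \in w by rewrite -(perm_mem perm_auw) mem_head.
case/splitPr: aw perm_auw => w1 w2 perm_auw.
have perm_u : perm_eq u (w1 ++ w2).
  by rewrite -(perm_cons a) (perm_trans perm_auw) // -cat1s perm_catCA.
have min_a : all (leq a) u := order_path_min leq_trans sorted_au.
have min_a_w1 : all (leq a) w1.
  apply/allP => b bw1; have : b \in a :: u by rewrite (perm_mem perm_auw) mem_cat bw1.
  by rewrite inE => /predU1P[-> //|/(allP min_a)].
apply: leq_trans (prefix_sum_move_front w2 k min_a_w1).
case: k => [|k] //=; rewrite leq_add2l.
exact: IH (path_sorted sorted_au) perm_u k.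
Qed.

Lemma sum_smallest_le (s t r : seq nat) (k : nat) :
  perm_eq s (t ++ r) -> k <= size t -> sumn (take k (sort leq s)) <= sumn t.
Proof.
move=> perm_s k_le.
have perm_sorted := perm_trans (permEl (perm_sort leq s)) perm_s.
apply: leq_trans (sorted_prefix_sum_min (sort_sorted leq_total s) perm_sorted k) _.
rewrite take_cat; case: ltnP => [_|t_le_k].
  by rewrite -{2}(cat_take_drop k t) sumn_cat leq_addr.
have -> : k - size t = 0 by lia.
by rewrite take0 cats0.
Qed.

Section LocalComponents.
Variables (T : finType) (e : rel T) (z : T).
Hypothesis e_sym : symmetric e.

Definition component_of (x : T) : {set T} :=
  [set y | (y != z) && connect (del_rel e z) x y].

Lemma del_rel_connect_sym : connect_sym (del_rel e z).
Proof.
apply: sym_connect_sym => x y; rewrite /del_rel e_sym.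
by case: (x != z); case: (y != z); rewrite ?andbF ?andbT.
Qed.

Lemma local_componentP C : C \in local_components e z ->
  exists2 x, x != z & C = component_of x.
Proof. by case/imsetP => x; rewrite inE => xz ->; exists x. Qed.

Lemma local_component_neq C y : C \in local_components e z -> y \in C -> y != z.
Proof. by case/local_componentP => x _ ->; rewrite inE => /andP[]. Qed.

Lemma local_component_closed C v u : C \in local_components e z ->
  v \in C -> connect (del_rel e z) v u -> u != z -> u \in C.
Proof.
case/local_componentP => x _ ->; rewrite !inE => /andP[_ xv] vu ->.
exact: connect_trans xv vu.
Qed.

Lemma local_component_eq C1 C2 y1 y2 :
  C1 \in local_components e z -> C2 \in local_components e z ->
  y1 \in C1 -> y2 \in C2 -> connect (del_rel e z) y1 y2 -> C1 = C2.
Proof.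
move=> /local_componentP[x1 _ ->] /local_componentP[x2 _ ->].
rewrite !inE => /andP[_ x1y1] /andP[_ x2y2] y1y2.
have x1x2 : connect (del_rel e z) x1 x2.
  by rewrite (connect_trans (connect_trans x1y1 y1y2)) // del_rel_connect_sym.
by apply/setP => w; rewrite !inE (same_connect del_rel_connect_sym x1x2).
Qed.

Lemma local_components_trivIset (F : {set {set T}}) :
  F \subset local_components e z -> trivIset F.
Proof.
move=> /subsetP sub; apply/trivIsetP => A B AF BF; apply: contraNT.
case/pred0Pn => y /andP[yA yB]; apply/eqP.
exact: local_component_eq (sub A AF) (sub B BF) yA yB (connect0 _ _).
Qed.
End LocalComponents.

Definition reaching_left (R : realFieldType) (T : finType) (e : rel T)
    (lo : T -> R) (z : T) : {set {set T}} :=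
  [set C in local_components e z | [exists v in C, (lo v < lo z)%R]].

Definition reaching_right (R : realFieldType) (T : finType) (e : rel T)
    (hi : T -> R) (z : T) : {set {set T}} :=
  [set C in local_components e z | [exists v in C, (hi z < hi v)%R]].

Lemma interval_rep_mirror (R : realFieldType) (T : finType) (e : rel T)
    (lo hi : T -> R) :
  interval_rep e lo hi -> interval_rep e (fun x => - hi x)%R (fun x => - lo x)%R.
Proof.
move=> [lohi iedge]; split => [v|v w vw]; first by rewrite lerN2.
by rewrite iedge // !lerN2 andbC.
Qed.

Section Geometry.
Variables (R : realFieldType) (T : finType) (e : rel T) (lo hi : T -> R).
Hypotheses (e_simple : simple_graph e) (e_conn : connected_graph e).
Hypothesis rep : interval_rep e lo hi.

(* Starting from v left of z, G \ {z} reaches an interval covering lo z: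
   otherwise every vertex reachable from v ends before lo z, and then no
   e-path from v could ever step onto z, contradicting connectedness. *)
Lemma reach_left_end (z v : T) : v != z -> (lo v < lo z)%R ->
  exists u, [/\ connect (del_rel e z) v u, u != z & (lo u <= lo z <= hi u)%R].
Proof.
move=> vz lo_vz; have [_ e_irr] := e_simple; have [_ iedge] := rep.
case: (boolP [exists u,
    [&& connect (del_rel e z) v u, u != z & (lo u <= lo z <= hi u)%R]]).
  by case/existsP => u /and3P[vu uz cover]; exists u.
rewrite negb_exists => /forallP no_cover.
have left_of_z x : connect (del_rel e z) v x -> x != z ->
    (lo x <= lo z)%R -> (hi x < lo z)%R.
  by move=> vx xz; have := no_cover x; rewrite vx xz /= negb_and => /orP[]; lra.
have avoid p x : connect (del_rel e z) v x -> x != z -> (lo x <= lo z)%R ->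
    path e x p -> last x p != z.
  elim: p x => [|y p IH] x //= vx xz lo_xz /andP[exy yp].
  have xy : x != y by apply: contraTneq exy => ->; rewrite e_irr.
  have /andP[_ lo_yx] := (iedge x y xy).1 exy.
  have hi_xz := left_of_z x vx xz lo_xz.
  have yz : y != z by apply: contraTneq lo_yx => ->; lra.
  apply: IH yp => //; last by lra.
  by apply: connect_trans vx (connect1 _); rewrite /del_rel exy xz.
have /connectP[p vp zp] := e_conn v z.
by have := avoid p v (connect0 _ _) vz (ltW lo_vz) vp; rewrite -zp eqxx.
Qed.

Lemma reaching_left_le1 (z : T) : #|reaching_left e lo z| <= 1.
Proof.
have [e_sym _] := e_simple; have [_ iedge] := rep.
apply/card_le1_eqP => C1 C2; rewrite !inE.
move=> /andP[C1L /exists_inP[v1 v1C lo_v1]] /andP[C2L /exists_inP[v2 v2C lo_v2]].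
have [u1 [v1u1 u1z /andP[lo_u1 hi_u1]]] :=
  reach_left_end (local_component_neq C1L v1C) lo_v1.
have [u2 [v2u2 u2z /andP[lo_u2 hi_u2]]] :=
  reach_left_end (local_component_neq C2L v2C) lo_v2.
have u1C1 := local_component_closed C1L v1C v1u1 u1z.
have u2C2 := local_component_closed C2L v2C v2u2 u2z.
symmetry; apply: (local_component_eq e_sym C1L C2L u1C1 u2C2).
have [<-|u12] := eqVneq u1 u2; first exact: connect0.
apply: connect1; rewrite /del_rel u1z u2z !andbT.
by apply/(iedge u1 u2 u12)/andP; split; lra.
Qed.
End Geometry.

Lemma reaching_right_le1 (R : realFieldType) (T : finType) (e : rel T)
    (lo hi : T -> R) (z : T) :
  simple_graph e -> connected_graph e -> interval_rep e lo hi ->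
  #|reaching_right e hi z| <= 1.
Proof.
move=> e_simple e_conn rep.
have := reaching_left_le1 e_simple e_conn (interval_rep_mirror rep) z.
congr (_ <= _); apply: eq_card => C; rewrite !inE; congr (_ && _).
by apply: eq_existsb => v; rewrite ltrN2.
Qed.

Section NestedComponents.
Variables (R : realFieldType) (T : finType) (e : rel T) (lo hi : T -> R) (z : T).
Hypotheses (e_simple : simple_graph e) (e_conn : connected_graph e).
Hypothesis rep : interval_rep e lo hi.

Definition nested_components : {set {set T}} :=
  [set C in local_components e z |
     [forall v in C, (lo z <= lo v)%R && (hi v <= hi z)%R]].

Lemma nested_sub_local : nested_components \subset local_components e z.
Proof. by apply/subsetP => C; rewrite inE => /andP[]. Qed.

(* Every vertex of a nested component meets I_z, so it is non-exterior. *)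
Lemma nested_non_exterior C : C \in nested_components -> ~~ exterior e z C.
Proof.
have [e_sym _] := e_simple; have [lohi iedge] := rep.
rewrite inE => /andP[CL /forall_inP inside]; rewrite negb_exists_in.
apply/forall_inP => v vC; rewrite negbK e_sym.
have /andP[lo_zv hi_vz] := inside v vC; have lohi_v := lohi v.
by apply/(iedge v z (local_component_neq CL vC))/andP; split; lra.
Qed.

Lemma nested_card : #|local_components e z| - 2 <= #|nested_components|.
Proof.
have left_le1 := reaching_left_le1 e_simple e_conn rep z.
have right_le1 := reaching_right_le1 z e_simple e_conn rep.
have split_LC := cardsID nested_components (local_components e z).
rewrite (setIidPr nested_sub_local) in split_LC.
have not_nested : local_components e z :\: nested_components
    \subset reaching_left e lo z :|: reaching_right e hi z.
  apply/subsetP => C; rewrite /reaching_left /reaching_right !inE.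
  move=> /andP[not_nested CL].
  rewrite CL /= negb_forall_in in not_nested *.
  case/exists_inP: not_nested => v vC; rewrite negb_and.
  by case/orP => [lo_vz|hi_zv]; [apply/orP; left|apply/orP; right];
    apply/exists_inP; exists v => //; rewrite ltNge.
have [card_U _] := leq_card_setU (reaching_left e lo z) (reaching_right e hi z).
have := subset_leq_card not_nested; lia.
Qed.

(* Nested components are disjoint sets of vertices w <> z with I_w inside
   I_z, hence their orders sum to at most imp_alpha(z). *)
Lemma nested_sum_le_imp : \sum_(C in nested_components) #|C| <= imp_at lo hi z.
Proof.
have [e_sym _] := e_simple.
have /eqP -> := local_components_trivIset e_sym nested_sub_local.
apply: subset_leq_card; apply/subsetP => y /bigcupP[C CN yC].
move: CN; rewrite inE => /andP[CL /forall_inP inside].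
by rewrite inE /= (local_component_neq CL yC) (inside y yC).
Qed.

Lemma wt_at_le_imp_at : wt_at e z <= imp_at lo hi z.
Proof.
rewrite /wt_at; set NE := [set C in local_components e z | ~~ exterior e z C].
have nested_NE : nested_components \subset NE.
  apply/subsetP => C CN; rewrite inE nested_non_exterior // andbT.
  exact: (subsetP nested_sub_local).
have split_NE :
    perm_eq (enum NE) (enum nested_components ++ enum (NE :\: nested_components)).
  apply: uniq_perm; first exact: enum_uniq.
    rewrite cat_uniq !enum_uniq andbT /=; apply/hasPn => C.
    by rewrite !mem_enum !inE => /andP[/negbTE ->].
  move=> C; rewrite mem_cat !mem_enum in_setD.
  by case CN: (C \in nested_components) => //=; apply: (subsetP nested_NE).
have := perm_map (fun C : {set T} => #|C|) split_NE; rewrite map_cat => perm_sizes.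
have size_ge : #|local_components e z| - 2
    <= size [seq #|C| | C : {set T} <- enum nested_components].
  by rewrite size_map -cardE nested_card.
apply: leq_trans (sum_smallest_le perm_sizes size_ge) _.
by rewrite sumnE big_map big_enum nested_sum_le_imp.
Qed.
End NestedComponents.

Theorem corollary2p3 (R : realFieldType) (T : finType) (e : rel T) :
  simple_graph e -> connected_graph e ->
  is_interval_graph R e ->
  forall lo hi : T -> R, interval_rep e lo hi ->
  wt e <= imp_rep lo hi.
Proof.
move=> e_simple e_conn _ lo hi rep.
apply/bigmax_leqP => z _.
apply: leq_trans (wt_at_le_imp_at z e_simple e_conn rep) _.
exact: leq_bigmax.
Qed.
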